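(* Let $a<b$ be real numbers and $(R_n)_{n\ge0}$ a sequence of real polynomials such that: (a) $R_0$ is a constant and $R_1$ has degree $1$; (b) there exist $\alpha,\beta\in\mathbb{R}$, $\alpha\ne0$, with $R_n=(\alpha X+\beta)R_{n-1}-R_{n-2}$ for all $n\ge2$; (c) either (i) $R_n(a)R_{n+1}(a)>0$ and $R_n(b)R_{n+1}(b)<0$ for all $n\ge0$, or (ii) $R_n(a)R_{n+1}(a)<0$ and $R_n(b)R_{n+1}(b)>0$ for all $n\ge0$. Then: (1) $\deg R_n=n$; (2) all roots of $R_n$ are real, simple and lie in $(a,b)$: $a<x^{(n)}_1<\cdots<x^{(n)}_n<b$; (3) the roots of $R_{n+1}$ interlace those of $R_n$: $a<x^{(n+1)}_1<x^{(n)}_1<x^{(n+1)}_2<\cdots<x^{(n)}_n<x^{(n+1)}_{n+1}<b$. *)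

From HB Require Import structures.
From mathcomp Require Import all_boot all_order all_algebra.
From mathcomp Require Import reals.
Set Implicit Arguments. Unset Strict Implicit. Unset Printing Implicit Defensive.
Import Order.TTheory GRing.Theory Num.Theory.
Local Open Scope ring_scope.

(* Hence all roots of p
   (in any extension field) are real, simple, and are exactly the entries
   of s. *)
Definition real_simple_roots_in (R : realType) (a b : R) (p : {poly R})
    (s : seq R) : Prop :=
  [/\ sorted <%R s,
      all (fun x => (a < x) && (x < b)) s &
      p = lead_coef p *: \prod_(x <- s) ('X - x%:P)].

Definition interlace (R : realType) (s t : seq R) : Prop :=
  forall i, (i < size s)%N -> nth 0 t i < nth 0 s i /\ nth 0 s i < nth 0 t i.+1.

From HB Require Import structures.
From mathcomp Require Import all_boot all_order all_algebra.
From mathcomp Require Import reals polyrcf ring lra.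
Import Order.TTheory GRing.Theory Num.Theory.
Local Open Scope ring_scope.

(* Induct on n, carrying the roots of two consecutive polynomials.  If P_{n+1}
   has simple roots y_0 < ... < y_n interlaced by those of P_n, then
   P_{n+2} = -P_n at every y_j, so interlacing makes the sign of P_{n+2}
   alternate along y; two consecutive instances of condition (c) say that
   P_{n+2} has the sign of P_n at a and at b, which extends the alternation to
   a < y_0 < ... < y_n < b.  The intermediate value theorem gives a root in
   each of these n + 2 gaps, and since deg P_{n+2} <= n + 2 these are all the
   roots, and they are simple. *)

Section SimpleRealRoots.
Context {R : realType}.
Implicit Types (a b c u v : R) (p : {poly R}) (s w x y z : seq R).

Lemma lt_sorted_nth_lt {s i j} : sorted <%R s -> (i < j)%N -> (j < size s)%N ->
  nth 0 s i < nth 0 s j.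
Proof.
move=> ss ij js; apply: (sorted_ltn_nth lt_trans) => //.
by rewrite inE (ltn_trans ij js).
Qed.

Lemma lt_sorted_nth_le {s i j} : sorted <%R s -> (i <= j)%N -> (j < size s)%N ->
  nth 0 s i <= nth 0 s j.
Proof.
rewrite lt_sorted_uniq_le => /andP[_ ss] ij js.
by apply: (sorted_leq_nth le_trans lexx) => //; rewrite inE (leq_ltn_trans ij js).
Qed.

Lemma mulr_gt0_common_factor {c u v} : 0 < c * u -> 0 < c * v -> 0 < u * v.
Proof. by move=> cu cv; nra. Qed.

Lemma prod_XsubC_of_roots p s : (size p <= (size s).+1)%N ->
  all (root p) s -> uniq s -> p = lead_coef p *: \prod_(x <- s) ('X - x%:P).
Proof.
move=> sp rs us; have [->|p0] := eqVneq p 0; first by rewrite lead_coef0 scale0r.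
have urs : poly.uniq_roots s by rewrite poly.uniq_rootsE.
apply: all_roots_prod_XsubC (rs) urs.
by apply/eqP; rewrite eqn_leq sp (max_poly_roots p0 rs us).
Qed.

Lemma size_real_simple_roots_in {a b p s} : p != 0 ->
  real_simple_roots_in a b p s -> size p = (size s).+1.
Proof.
by move=> p0 [_ _ ->]; rewrite size_scale ?lead_coef_eq0 // size_prod_XsubC.
Qed.

Lemma real_simple_roots_inE {a b p s} : p != 0 ->
  real_simple_roots_in a b p s -> s = roots p a b.
Proof.
move=> p0 [ss sab ps]; apply: roots_uniq => // x.
rewrite ps rootZ ?lead_coef_eq0 // root_prod_XsubC in_itv /=.
by apply/idP/idP => [/andP[]//|xs]; rewrite xs andbT (allP sab).
Qed.

Lemma roots_between_sign_changes {p w n} : size w = n.+1 -> sorted <%R w ->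
  (size p <= n.+1)%N ->
  (forall i, (i < n)%N -> p.[nth 0 w i] * p.[nth 0 w i.+1] < 0) ->
  exists x, [/\ size x = n,
    forall i, (i < n)%N -> nth 0 w i < nth 0 x i < nth 0 w i.+1 &
    real_simple_roots_in (nth 0 w 0) (nth 0 w n) p x].
Proof.
move=> sw ws sp sgn.
have root_in i : {r | (i < n)%N -> nth 0 w i < r < nth 0 w i.+1 /\ root p r}.
  case: (ltnP i n) => hi; last by exists 0.
  have [|r] := poly_ivtoo (ltW (lt_sorted_nth_lt ws (ltnSn i) _)) (sgn i hi).
    by rewrite sw.
  by rewrite in_itv /= => wr pr; exists r.
pose x := mkseq (fun i => sval (root_in i)) n.
have sx : size x = n by rewrite size_mkseq.
have x_between i : (i < n)%N -> nth 0 w i < nth 0 x i < nth 0 w i.+1.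
  by move=> hi; rewrite nth_mkseq //; have [] := svalP (root_in i) hi.
have x_root i : (i < n)%N -> root p (nth 0 x i).
  by move=> hi; rewrite nth_mkseq //; have [] := svalP (root_in i) hi.
have x_sorted : sorted <%R x.
  apply/(sortedP 0) => i; rewrite sx => hi.
  have /andP[_ lt1] := x_between i (ltnW hi).
  by have /andP[lt2 _] := x_between i.+1 hi; apply: lt_trans lt2.
exists x; split => //; split => //.
- apply/(all_nthP 0) => i; rewrite sx => hi.
  have /andP[wx xw] := x_between i hi.
  apply/andP; split.
  + by apply: le_lt_trans wx; apply: lt_sorted_nth_le; rewrite ?sw // ltnW.
  + by apply: lt_le_trans xw _; apply: lt_sorted_nth_le; rewrite ?sw.
- apply: prod_XsubC_of_roots; first by rewrite sx.
  + by apply/(all_nthP 0) => i; rewrite sx; apply: x_root.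
  + exact: lt_sorted_uniq x_sorted.
Qed.

Lemma horner_scale_prod_XsubC_mul c z u v :
  (c *: \prod_(x <- z) ('X - x%:P)).[u] * (c *: \prod_(x <- z) ('X - x%:P)).[v] =
  c ^+ 2 * \prod_(k < size z) ((u - nth 0 z k) * (v - nth 0 z k)).
Proof.
have hprod t : (\prod_(x <- z) ('X - x%:P)).[t] = \prod_(k < size z) (t - nth 0 z k).
  rewrite horner_prod (big_nth 0) big_mkord.
  by apply: eq_bigr => k _; rewrite hornerXsubC.
by rewrite !hornerZ !hprod big_split /=; ring.
Qed.

Lemma scale_prod_XsubC_same_sign {c z u v} : c != 0 ->
  (forall k, (k < size z)%N -> 0 < (u - nth 0 z k) * (v - nth 0 z k)) ->
  0 < (c *: \prod_(x <- z) ('X - x%:P)).[u] * (c *: \prod_(x <- z) ('X - x%:P)).[v].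
Proof.
move=> c0 hz; rewrite horner_scale_prod_XsubC_mul mulr_gt0 ?exprn_even_gt0 //.
by apply: prodr_gt0 => k _; apply: hz.
Qed.

Lemma scale_prod_XsubC_sign_change {c z u v j} : c != 0 -> (j < size z)%N ->
  (u - nth 0 z j) * (v - nth 0 z j) < 0 ->
  (forall k, (k < size z)%N -> k != j -> 0 < (u - nth 0 z k) * (v - nth 0 z k)) ->
  (c *: \prod_(x <- z) ('X - x%:P)).[u] * (c *: \prod_(x <- z) ('X - x%:P)).[v] < 0.
Proof.
move=> c0 jz hj hz; rewrite horner_scale_prod_XsubC_mul (bigD1 (Ordinal jz)) //=.
rewrite pmulr_rlt0 ?exprn_even_gt0 // nmulr_rlt0 //.
by apply: prodr_gt0 => k kj; apply: hz.
Qed.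

Section Interlacing.
Context {p : {poly R}} {z y : seq R}.
Hypotheses (pE : p = lead_coef p *: \prod_(x <- z) ('X - x%:P))
  (p_lead : lead_coef p != 0) (y_sorted : sorted <%R y)
  (size_y : size y = (size z).+1) (zy : interlace z y).

Lemma interlace_sign_change j : (j < size z)%N ->
  p.[nth 0 y j] * p.[nth 0 y j.+1] < 0.
Proof.
move=> jz; have jy : (j.+1 < size y)%N by rewrite size_y ltnS.
have y_step : nth 0 y j < nth 0 y j.+1 by apply: lt_sorted_nth_lt.
rewrite pE; apply: (scale_prod_XsubC_sign_change p_lead jz).
  by have [] := zy _ jz; nra.
move=> k kz kj; have [ykz zyk] := zy _ kz.
have [kj'|jk] := ltnP k j.
  have : nth 0 y k.+1 <= nth 0 y j by apply: lt_sorted_nth_le (ltnW jy).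
  nra.
have jk' : (j < k)%N by rewrite ltn_neqAle eq_sym kj.
have : nth 0 y j.+1 <= nth 0 y k.
  by apply: lt_sorted_nth_le; rewrite // size_y ltnS ltnW.
nra.
Qed.

Lemma interlace_same_sign_first {u} : u <= nth 0 y 0 -> 0 < p.[u] * p.[nth 0 y 0].
Proof.
move=> uy; rewrite pE; apply: scale_prod_XsubC_same_sign => // k kz.
have [ykz _] := zy _ kz.
have : nth 0 y 0 <= nth 0 y k.
  by apply: lt_sorted_nth_le; rewrite // size_y ltnS ltnW.
nra.
Qed.

Lemma interlace_same_sign_last {v} : nth 0 y (size z) <= v ->
  0 < p.[nth 0 y (size z)] * p.[v].
Proof.
move=> yv; rewrite pE; apply: scale_prod_XsubC_same_sign => // k kz.
have [_ zyk] := zy _ kz.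
have : nth 0 y k.+1 <= nth 0 y (size z) by apply: lt_sorted_nth_le; rewrite ?size_y.
nra.
Qed.

End Interlacing.

Section RecurrenceStep.
Context {a b alpha beta : R} {Pm Py Q : {poly R}} {z y : seq R}.
Hypotheses (ab : a < b) (Pm_roots : real_simple_roots_in a b Pm z)
  (Py_roots : real_simple_roots_in a b Py y) (Pm_lead : lead_coef Pm != 0)
  (size_y : size y = (size z).+1) (zy : interlace z y)
  (QE : Q = (alpha *: 'X + beta%:P) * Py - Pm)
  (PmQ_a : 0 < Pm.[a] * Q.[a]) (PmQ_b : 0 < Pm.[b] * Q.[b]).

Let w := a :: rcons y b.

Let nth_w_first : nth 0 w 0 = a.
Proof. by []. Qed.

Let nth_w j : (j < size y)%N -> nth 0 w j.+1 = nth 0 y j.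
Proof. by move=> jy; rewrite /= nth_rcons jy. Qed.

Let nth_w_last : nth 0 w (size y).+1 = b.
Proof. by rewrite /= nth_rcons ltnn eqxx. Qed.

Let w_sorted : sorted <%R w.
Proof.
have [ys yab _] := Py_roots.
rewrite /w /= rcons_path (path_sortedE lt_trans) ys andbT; apply/andP; split.
  by apply/allP => u /(allP yab) /andP[].
by have := mem_last a y; rewrite inE => /orP[/eqP->//|/(allP yab)/andP[]].
Qed.

Let size_Q : (size Q <= (size y).+2)%N.
Proof.
have [_ _ PmE] := Pm_roots; have [_ _ PyE] := Py_roots.
have sPm : (size Pm <= (size z).+1)%N.
  by rewrite PmE (leq_trans (size_scale_leq _ _)) // size_prod_XsubC.
have sPy : (size Py <= (size y).+1)%N.
  by rewrite PyE (leq_trans (size_scale_leq _ _)) // size_prod_XsubC.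
have sL : (size (alpha *: 'X + beta%:P)%R <= 2)%N.
  rewrite (leq_trans (size_polyD _ _)) // geq_max.
  by rewrite (leq_trans (size_scale_leq _ _)) ?size_polyX // (leq_trans (size_polyC_leq1 _)).
rewrite QE (leq_trans (size_polyD _ _)) // size_polyN geq_max.
apply/andP; split; last by rewrite size_y (leq_trans sPm (leq_addl 2 _)).
have := leq_add sL sPy; rewrite add2n => sum_le.
apply: leq_trans (size_polyMleq _ _) _.
by rewrite -subn1 leq_subLR add1n.
Qed.

Let Q_at_roots j : (j < size y)%N -> Q.[nth 0 y j] = - Pm.[nth 0 y j].
Proof.
move=> jy; have [_ _ PyE] := Py_roots.
have Py_root : root Py (nth 0 y j).
  by rewrite PyE rootE hornerZ (rootP _) ?mulr0 // root_prod_XsubC mem_nth.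
by rewrite QE hornerD hornerN hornerM (rootP Py_root) mulr0 add0r.
Qed.

Let Q_sign_changes i : (i < (size y).+1)%N ->
  Q.[nth 0 w i] * Q.[nth 0 w i.+1] < 0.
Proof.
have [ys yab PyE] := Py_roots; have [_ _ PmE] := Pm_roots.
have y0 : (0 < size y)%N by rewrite size_y.
case: i => [_|j jy].
  rewrite nth_w_first nth_w // Q_at_roots //.
  have /andP[ay0 _] : a < nth 0 y 0 < b by apply: (allP yab); rewrite mem_nth.
  have Pm_a_y0 := interlace_same_sign_first PmE Pm_lead ys size_y zy (ltW ay0).
  by rewrite mulrN oppr_lt0 (mulr_gt0_common_factor PmQ_a).
rewrite ltnS in jy; rewrite nth_w //; have [jy'|yj] := ltnP j.+1 (size y).
  rewrite nth_w // !Q_at_roots // mulrNN.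
  by apply: (interlace_sign_change PmE Pm_lead ys size_y zy); rewrite -ltnS -size_y.
have -> : j = size z by apply/eqP; rewrite -eqSS -size_y eqn_leq jy yj.
rewrite -size_y nth_w_last Q_at_roots ?size_y //.
have /andP[_ ymb] : a < nth 0 y (size z) < b by apply: (allP yab); rewrite mem_nth ?size_y.
have Pm_ym_b := interlace_same_sign_last PmE Pm_lead ys size_y zy (ltW ymb).
by rewrite mulNr oppr_lt0 (mulr_gt0_common_factor _ PmQ_b) // mulrC.
Qed.

Lemma recurrence_step :
  exists x, [/\ size x = (size y).+1, real_simple_roots_in a b Q x & interlace y x].
Proof.
have [|x [sx xw xQ]] := roots_between_sign_changes _ w_sorted size_Q Q_sign_changes.
  by rewrite /= size_rcons.
exists x; split => //; first by rewrite nth_w_last in xQ.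
move=> i iy; have /andP[_ xy] := xw i (ltnW iy).
have /andP[yx _] := xw i.+1 iy.
by rewrite !nth_w in xy yx.
Qed.

End RecurrenceStep.

End SimpleRealRoots.

Theorem proposition5 (R : realType) (a b alpha beta : R) (P : nat -> {poly R}) :
  a < b ->
  (size (P 0%N) <= 1)%N ->
  (size (P 1%N) = 2)%N ->
  alpha != 0 ->
  (forall n, (2 <= n)%N ->
     P n = (alpha *: 'X + beta%:P) * P n.-1 - P n.-2) ->
  ((forall n, 0 < (P n).[a] * (P n.+1).[a] /\ (P n).[b] * (P n.+1).[b] < 0) \/
   (forall n, (P n).[a] * (P n.+1).[a] < 0 /\ 0 < (P n).[b] * (P n.+1).[b])) ->
  exists xs : nat -> seq R,
    forall n,
      [/\ (size (P n) = n.+1)%N,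
          size (xs n) = n,
          real_simple_roots_in a b (P n) (xs n) &
          interlace (xs n) (xs n.+1)].
Proof.
move=> ab sP0 sP1 _ rec signs.
have P_neq0 n : P n != 0.
  by apply/eqP => Pn0; case: signs => /(_ n) []; rewrite Pn0 horner0 !mul0r ltxx.
have skip_sign n : 0 < (P n).[a] * (P n.+2).[a] /\ 0 < (P n).[b] * (P n.+2).[b].
  by case: signs => signs; have [? ?] := signs n; have [? ?] := signs n.+1; split; nra.
have P0E : P 0%N = lead_coef (P 0%N) *: \prod_(x <- [::]) ('X - x%:P).
  exact: prod_XsubC_of_roots.
have P1_change : (P 1%N).[a] * (P 1%N).[b] < 0.
  have P0ab : (P 0%N).[a] = (P 0%N).[b] by rewrite P0E !hornerZ big_nil !hornerC.
  by case: signs => /(_ 0%N) []; rewrite P0ab; nra.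
have [r] := poly_ivtoo (ltW ab) P1_change; rewrite in_itv /= => r_ab r_root.
have roots_step n : exists s t, [/\ size s = n, size t = n.+1,
    real_simple_roots_in a b (P n) s, real_simple_roots_in a b (P n.+1) t &
    interlace s t].
  elim: n => [|n [s [t [ss st rs rt st_int]]]].
    exists [::], [:: r]; split => //; split => //; first by rewrite /= r_ab.
    by apply: prod_XsubC_of_roots; rewrite ?sP1 //= r_root.
  have lead_n : lead_coef (P n) != 0 by rewrite lead_coef_eq0.
  have sts : size t = (size s).+1 by rewrite st ss.
  have [x [sx rx tx]] := recurrence_step ab rs rt lead_n sts st_int
    (rec n.+2 isT) (skip_sign n).1 (skip_sign n).2.
  by exists t, x; rewrite sx st.
exists (fun n => roots (P n) a b) => n.
have [s [t [ss st rs rt st_int]]] := roots_step n.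
rewrite -(real_simple_roots_inE (P_neq0 n) rs).
rewrite -(real_simple_roots_inE (P_neq0 n.+1) rt).
by rewrite (size_real_simple_roots_in (P_neq0 n) rs) ss.
Qed.
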